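(* Let $r>0$, $p\in(0,1)$, and let $X_1,\dots,X_n$ be i.i.d. samples of a negative binomial random variable $X$ with $\Pr\{X=x\}=\frac{\Gamma(x+r)}{\Gamma(x+1)\Gamma(r)}(1-p)^xp^r$ for $x=0,1,2,\dots$. Let $T(x)=\frac{r+x}{r}$ and $\theta=\frac1p$. Then $$\Pr\Big\{\sum_{i=1}^nT(X_i)\ge nz\Big\}\le\left[\frac{pz-p}{1-p}\Big(\frac{z-zp}{z-1}\Big)^z\right]^{nr}\quad\text{for } z\ge\theta=\tfrac1p,$$ $$\Pr\Big\{\sum_{i=1}^nT(X_i)\le nz\Big\}\le\left[\frac{pz-p}{1-p}\Big(\frac{z-zp}{z-1}\Big)^z\right]^{nr}\quad\text{for } 1<z\le\theta=\tfrac1p.$$ *)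

From HB Require Import structures.
From mathcomp Require Import all_boot all_order all_algebra.
From mathcomp Require Import all_classical all_reals all_analysis.
Set Implicit Arguments. Unset Strict Implicit. Unset Printing Implicit Defensive.
Import Order.TTheory GRing.Theory Num.Theory.
Local Open Scope classical_set_scope.
Local Open Scope ring_scope.

(* Negative binomial pmf with real parameter r > 0:
   Gamma(x+r)/(Gamma(x+1) Gamma(r)) = r (r+1) ... (r+x-1) / x!  for x : nat. *)
Definition negbin_pmf (R : realType) (r p : R) (x : nat) : R :=
  (\prod_(j < x) (r + j%:R)) / (x`!)%:R * (1 - p) ^+ x * p `^ r.

Definition Tstat (R : realType) (r : R) (x : nat) : R := (r + x%:R) / r.

Definition mutually_independent_nat (d : measure_display) (T : measurableType d)
  (R : realType) (P : probability T R) (n : nat) (X : 'I_n -> T -> nat) : Prop :=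
  forall (J : {set 'I_n}) (B : 'I_n -> set nat),
    P (\bigcap_(j in [set j | j \in J]) (X j @^-1` B j)) =
    (\prod_(j in J) P (X j @^-1` B j))%E.

Definition nb_bound (R : realType) (r p : R) (n : nat) (z : R) : R :=
  ((p * z - p) / (1 - p) * ((z - z * p) / (z - 1)) `^ z) `^ (n%:R * r).

(* Chernoff's method.  For u > 0 with (1 - p) u < 1 the probability generating
   function of the negative binomial law is E[u^X] = p^r (1 - (1 - p) u)^-r, so
   Markov's inequality for u^(X_1 + ... + X_n) together with independence bounds
   the probability of any event on which u^(X_1 + ... + X_n - c) >= 1 by
   u^-c E[u^X]^n.  The tilt u = (z - 1) / (z (1 - p)) with c = n r (z - 1) turns
   this into the stated bound; u >= 1 exactly when z >= 1/p, which gives the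
   upper tail, and u <= 1 gives the lower tail.  As E[u^X] is an infinite
   series, the estimate is first made on the events where every X_i < M, which
   only involve partial sums of the series; these are bounded by (1 - a)^-r, and
   M -> oo by continuity of P from below. *)

From HB Require Import structures.
From mathcomp Require Import all_boot all_order all_algebra.
From mathcomp Require Import all_classical all_reals all_analysis.
From mathcomp Require Import ring lra.
Import Order.TTheory GRing.Theory Num.Theory.
Local Open Scope classical_set_scope.
Local Open Scope ring_scope.
Set Implicit Arguments. Unset Strict Implicit.

Section NegbinSeries.
Variables (R : realType) (r : R).
Hypothesis r_gt0 : 0 < r.

Definition negbin_coef (x : nat) : R := (\prod_(j < x) (r + j%:R)) / (x`!)%:R.

Definition negbin_psum (N : nat) (y : R) : R :=
  \sum_(x < N) negbin_coef x * y ^+ x.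

Definition negbin_dpsum (N : nat) (y : R) : R :=
  \sum_(x < N) negbin_coef x * (x%:R * y ^+ x.-1).

Lemma negbin_coefS x : negbin_coef x.+1 * x.+1%:R = (r + x%:R) * negbin_coef x.
Proof.
rewrite /negbin_coef big_ord_recr /= factS natrM.
have fact_neq0 : ((x`!)%:R : R) != 0 by rewrite pnatr_eq0 -lt0n fact_gt0.
by field; rewrite fact_neq0 nat1r pnatr_eq0.
Qed.

Lemma negbin_coef_ge0 x : 0 <= negbin_coef x.
Proof.
rewrite divr_ge0 // prodr_ge0 // => i _.
by rewrite addr_ge0 // ltW.
Qed.

Lemma negbin_psum_ode N y :
  (1 - y) * negbin_dpsum N y - r * negbin_psum N y =
  - (N%:R * negbin_coef N * y ^+ N.-1).
Proof.
elim: N => [|N IH]; first by rewrite /negbin_dpsum /negbin_psum !big_ord0; ring.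
rewrite /negbin_dpsum /negbin_psum !big_ord_recr /=.
rewrite -/(negbin_dpsum N y) -/(negbin_psum N y).
have -> : forall D S a b : R, (1 - y) * (D + a) - r * (S + b) =
    ((1 - y) * D - r * S) + ((1 - y) * a - r * b) by move=> *; ring.
rewrite IH -mulrA (mulrC _ (negbin_coef N.+1)) negbin_coefS.
by case: N {IH} => [|N] /=; rewrite ?exprS; ring.
Qed.

Lemma is_derive_negbin_psum N (y : R) :
  is_derive y 1 (negbin_psum N) (negbin_dpsum N y).
Proof.
have -> : negbin_psum N = \sum_(x < N) (negbin_coef x \*: (@id R) ^+ x).
  by apply/funext => w; rewrite fct_sumE; apply: eq_bigr => x _; rewrite !fctE.
apply: is_derive_eq.
by apply: eq_bigr => x _; rewrite /GRing.scale /= mulr1.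
Qed.

Lemma negbin_psum0_le1 N : negbin_psum N 0 <= 1.
Proof.
case: N => [|N]; first by rewrite /negbin_psum big_ord0.
rewrite /negbin_psum big_ord_recl big1 => [|i _]; last by rewrite expr0n mulr0.
by rewrite /negbin_coef big_ord0 fact0 divr1 expr0 !mulr1 addr0.
Qed.

(* The truncated series stays below its sum (1 - a)^-r: the function
   y |-> (1 - y)^r S_N(y) equals 1 at y = 0 and is nonincreasing, since
   by [negbin_psum_ode] its derivative is -(1 - y)^(r-1) N c_N y^(N-1). *)
Lemma negbin_psum_le N (a : R) :
  0 <= a -> a < 1 -> negbin_psum N a <= (1 - a) `^ (- r).
Proof.
move=> a_ge0 a_lt1.
pose g y := (1 - y) `^ r * negbin_psum N y.
pose dg y := - ((1 - y) `^ (r - 1) * (N%:R * negbin_coef N * y ^+ N.-1)).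
have g_derive (y : R) : y < 1 -> is_derive y 1 g (dg y).
  move=> y_lt1.
  have d1y : is_derive y 1 (fun w : R => 1 - w) (-1).
    by apply: is_derive_eq; rewrite add0r mul1r.
  have dpow := @is_derive1_comp R _ (fun w => 1 - w) y _ _
    (is_derive1_powR r (_ : 0 < 1 - y)) d1y.
  apply: is_derive_eq (is_deriveM (dpow _) (is_derive_negbin_psum N y)) _; first lra.
  rewrite /dg -mulrN -negbin_psum_ode /GRing.scale /=.
  rewrite -(mulr_powRB1 _ r_gt0) ?subr_ge0 ?ltW //.
  ring.
have [c c_in g_diff] : exists2 c, c \in `[0, a] & g a - g 0 = dg c * (a - 0).
  apply: MVT_segment => // [y|].
    by rewrite in_itv /= => /andP[_ ?]; apply: g_derive; lra.
  apply: derivable_within_continuous => y; rewrite in_itv /= => /andP[_ ?].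
  by have [] := g_derive y ltac:(lra).
have dg_le0 : dg c <= 0.
  move: c_in; rewrite in_itv /= => /andP[c_ge0 c_le].
  rewrite oppr_le0 mulr_ge0 ?powR_ge0 // mulr_ge0 ?exprn_ge0 //.
  by rewrite mulr_ge0 ?negbin_coef_ge0.
have : g a <= 1.
  have : g a - g 0 <= 0 by rewrite g_diff subr0 mulr_le0_ge0.
  by have := negbin_psum0_le1 N; rewrite /g subr0 powR1 mul1r; lra.
have pow_gt0 : 0 < (1 - a) `^ r by apply: powR_gt0; lra.
by rewrite /g powRN -ler_pdivlMl // mulr1.
Qed.

End NegbinSeries.

Section NegbinPmf.
Variables (R : realType) (r p : R).
Hypotheses (r_gt0 : 0 < r) (p_le1 : p <= 1).

Lemma negbin_pmfE x : negbin_pmf r p x = p `^ r * (negbin_coef r x * (1 - p) ^+ x).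
Proof. by rewrite /negbin_pmf /negbin_coef; ring. Qed.

Lemma negbin_pmf_ge0 x : 0 <= negbin_pmf r p x.
Proof.
rewrite negbin_pmfE mulr_ge0 ?powR_ge0 // mulr_ge0 ?negbin_coef_ge0 //.
by rewrite exprn_ge0 // subr_ge0.
Qed.

Lemma negbin_psum_pgf_le N u : 0 <= u -> (1 - p) * u < 1 ->
  \sum_(x < N) negbin_pmf r p x * u ^+ x <= p `^ r * (1 - (1 - p) * u) `^ (- r).
Proof.
move=> u_ge0 pu_lt1.
have pmf_pgf x : negbin_pmf r p x * u ^+ x =
    p `^ r * (negbin_coef r x * ((1 - p) * u) ^+ x).
  by rewrite negbin_pmfE exprMn; ring.
under eq_bigr do rewrite pmf_pgf.
rewrite -mulr_sumr ler_wpM2l ?powR_ge0 //.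
by apply: negbin_psum_le; rewrite // mulr_ge0 // subr_ge0.
Qed.

End NegbinPmf.

Lemma powR_sum_natr (R : realType) (u c : R) (n : nat) (w : 'I_n -> nat) : 0 < u ->
  u `^ (- c) * \prod_(i < n) u ^+ w i = u `^ ((\sum_(i < n) w i)%:R - c).
Proof.
move=> u_gt0; rewrite prodrXr -powR_mulrn ?ltW // mulrC -powRD //.
by rewrite (gt_eqF u_gt0) implybT.
Qed.

Section NegbinTilt.
Variables (R : realType) (p z : R).

Definition nb_tilt : R := (z - 1) / (z * (1 - p)).

Lemma nb_tilt_gt0 : p < 1 -> 1 < z -> 0 < nb_tilt.
Proof. by move=> *; apply: divr_gt0; [|apply: mulr_gt0]; lra. Qed.

Lemma nb_tiltE : p < 1 -> 1 < z -> (1 - p) * nb_tilt = 1 - z^-1.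
Proof. by move=> *; rewrite /nb_tilt; field; rewrite !gt_eqF //; lra. Qed.

Lemma nb_tilt_ge1 : 0 < p -> p < 1 -> p^-1 <= z -> 1 <= nb_tilt.
Proof.
move=> p_gt0 p_lt1 z_ge.
have pz_ge1 : 1 <= p * z by rewrite -(mulfV (lt0r_neq0 p_gt0)) ler_pM2l.
by rewrite /nb_tilt ler_pdivlMr ?mulr_gt0 //; nra.
Qed.

Lemma nb_tilt_le1 : 0 < p -> p < 1 -> 1 < z -> z <= p^-1 -> nb_tilt <= 1.
Proof.
move=> p_gt0 p_lt1 z_gt1 z_le.
have pz_le1 : p * z <= 1 by rewrite -(mulfV (lt0r_neq0 p_gt0)) ler_pM2l.
by rewrite /nb_tilt ler_pdivrMr ?mulr_gt0 //; nra.
Qed.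

End NegbinTilt.

(* Both sides are exponentials of linear combinations of
   ln p, ln z, ln (z - 1) and ln (1 - p). *)
Lemma nb_bound_tiltE (R : realType) (r p z : R) (n : nat) :
  0 < p -> p < 1 -> 1 < z ->
  nb_tilt p z `^ (- (n%:R * r * (z - 1))) *
  (p `^ r * (1 - (1 - p) * nb_tilt p z) `^ (- r)) ^+ n = nb_bound r p n z.
Proof.
move=> p_gt0 p_lt1 z_gt1.
have q_gt0 : 0 < 1 - p by lra.
have z_gt0 : 0 < z by lra.
have z1_gt0 : 0 < z - 1 by lra.
have zV_gt0 : 0 < z^-1 by rewrite invr_gt0.
have powRE (x y : R) : 0 < x -> x `^ y = expR (y * ln x).
  by move=> x_gt0; rewrite /powR gt_eqF.
have lnMexpR (x y : R) : 0 < x -> ln (x * expR y) = ln x + y.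
  by move=> x_gt0; rewrite lnM ?posrE ?expR_gt0 // expRK.
have b1E : (p * z - p) / (1 - p) = p * (z - 1) / (1 - p) by ring.
have b2E : (z - z * p) / (z - 1) = z * (1 - p) / (z - 1) by ring.
have b1_gt0 : 0 < p * (z - 1) / (1 - p) by rewrite divr_gt0 ?mulr_gt0.
have b2_gt0 : 0 < z * (1 - p) / (z - 1) by rewrite divr_gt0 ?mulr_gt0.
have tilt_gt0 := nb_tilt_gt0 p_lt1 z_gt1.
have tilt_ln : ln (nb_tilt p z) = ln (z - 1) - ln z - ln (1 - p).
  by rewrite ln_div ?posrE ?mulr_gt0 // lnM ?posrE //; ring.
have b1_ln : ln (p * (z - 1) / (1 - p)) = ln p + ln (z - 1) - ln (1 - p).
  by rewrite ln_div ?posrE ?mulr_gt0 // lnM ?posrE.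
have b2_ln : ln (z * (1 - p) / (z - 1)) = ln z + ln (1 - p) - ln (z - 1).
  by rewrite ln_div ?posrE ?mulr_gt0 // lnM ?posrE.
rewrite nb_tiltE // subKr /nb_bound b1E b2E.
rewrite (powRE _ _ tilt_gt0) (powRE _ _ p_gt0) (powRE _ _ zV_gt0).
rewrite -expRD -expRM_natr -expRD (powRE _ _ b2_gt0).
rewrite (powRE _ _ (mulr_gt0 b1_gt0 (expR_gt0 _))) lnMexpR //.
by rewrite lnV ?posrE // tilt_ln b1_ln b2_ln; congr expR; ring.
Qed.

Lemma measure_bigsetU_le d (T : ringOfSetsType d) (R : realFieldType)
    (mu : {content set T -> \bar R}) (I : Type) (s : seq I) (Q : pred I)
    (F : I -> set T) :
  (forall i, measurable (F i)) ->
  (mu (\big[setU/set0]_(i <- s | Q i) F i) <= \sum_(i <- s | Q i) mu (F i))%E.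
Proof.
move=> mF; elim: s => [|a s IH]; first by rewrite !big_nil measure0.
rewrite !big_cons; case: ifP => // _.
apply: le_trans (measureU2 _ (mF a) (bigsetU_measurable _ _)) _ => //.
exact: leeD2l.
Qed.

Section NegbinChernoff.
Variables (R : realType) (d : measure_display) (T : measurableType d)
  (P : probability T R) (r p : R) (n : nat) (X : 'I_n -> T -> nat).
Hypotheses (r_gt0 : 0 < r) (p_le1 : p <= 1)
  (X_meas : forall i, measurable_fun setT (X i))
  (X_law : forall i (x : nat), P (X i @^-1` [set x]) = (negbin_pmf r p x)%:E)
  (X_indep : mutually_independent_nat P X).

Definition Xeq (v : 'I_n -> nat) : set T := [set t | forall i, X i t = v i].

Lemma Xeq_bigcap v :
  Xeq v = \bigcap_(j in [set j | j \in [set: 'I_n]%SET]) (X j @^-1` [set v j]).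
Proof.
by apply/seteqP; split=> t Xt j => [_|]; apply: Xt; rewrite /= ?inE.
Qed.

Lemma measurable_Xeq v : measurable (Xeq v).
Proof.
rewrite Xeq_bigcap; apply: fin_bigcap_measurable => [|j _].
  exact: finite_finset.
by rewrite -[_ @^-1` _]setTI; exact: X_meas.
Qed.

Lemma P_Xeq v : P (Xeq v) = (\prod_i negbin_pmf r p (v i))%:E.
Proof.
rewrite Xeq_bigcap X_indep -prodEFin (eq_bigl xpredT) => [|i]; last by rewrite inE.
by apply: eq_bigr => i _; rewrite X_law.
Qed.

Section Truncation.
Variable cond : pred ('I_n -> nat).

Definition cond_box (M : nat) : set T :=
  [set t | cond (X^~ t) /\ forall i, (X i t < M)%N].

Lemma cond_box_bigsetU M : cond_box M =
  \big[setU/set0]_(v : {ffun 'I_n -> 'I_M} | cond (fun i => v i : nat))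
    Xeq (fun i => v i).
Proof.
rewrite -bigcup_seq_cond; apply/seteqP; split => t.
  move=> [ct X_lt]; set v := [ffun i => Ordinal (X_lt i)].
  have vE : (fun i => v i : nat) = X^~ t by apply/funext => i; rewrite ffunE.
  by exists v; rewrite /= ?mem_index_enum vE //.
move=> [v /= /andP[_ cv] Xt]; split => [|i]; last by rewrite Xt.
by have -> : X^~ t = (fun i => v i : nat) by apply/funext => i; exact: Xt.
Qed.

Lemma measurable_cond_box M : measurable (cond_box M).
Proof.
by rewrite cond_box_bigsetU; apply: bigsetU_measurable => v _; exact: measurable_Xeq.
Qed.

Variables (K u : R).
Hypotheses (K_ge0 : 0 <= K) (u_gt0 : 0 < u) (pu_lt1 : (1 - p) * u < 1)
  (cond_markov : forall w, cond w -> 1 <= K * \prod_i u ^+ (w i)).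

(* Markov's inequality for u^(X_1 + ... + X_n), computed on the finitely
   many values of X that lie in the box. *)
Lemma P_cond_box_le M :
  (P (cond_box M) <= (K * (p `^ r * (1 - (1 - p) * u) `^ (- r)) ^+ n)%:E)%E.
Proof.
rewrite cond_box_bigsetU.
apply: le_trans (measure_bigsetU_le P _ _ (fun v => measurable_Xeq _)) _.
rewrite (eq_bigr _ (fun v _ => P_Xeq _)).
rewrite sumEFin lee_fin.
pose F (v : {ffun 'I_n -> 'I_M}) := K * \prod_i (negbin_pmf r p (v i) * u ^+ v i).
have F_ge0 v : 0 <= F v.
  apply: mulr_ge0 => //; apply: prodr_ge0 => i _.
  by rewrite mulr_ge0 ?negbin_pmf_ge0 // exprn_ge0 // ltW.
apply: le_trans (_ : _ <= \sum_(v : {ffun 'I_n -> 'I_M} | cond (fun i => v i : nat)) F v) _.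
  apply: ler_sum => v cv; rewrite /F [X in _ <= _ * X]big_split mulrCA /=.
  rewrite ler_peMr ?cond_markov //.
  by rewrite prodr_ge0 // => i _; rewrite negbin_pmf_ge0.
apply: le_trans (_ : _ <= \sum_(v : {ffun 'I_n -> 'I_M}) F v) _.
  rewrite [X in _ <= X](bigID (fun v : {ffun 'I_n -> 'I_M} =>
    cond (fun i => v i : nat))) /=.
  by rewrite lerDl sumr_ge0.
rewrite -mulr_sumr ler_wpM2l //.
rewrite -(bigA_distr_bigA (fun (i : 'I_n) (j : 'I_M) => negbin_pmf r p j * u ^+ j)).
rewrite prodr_const card_ord lerXn2r ?nnegrE ?mulr_ge0 ?powR_ge0 //.
  by rewrite sumr_ge0 // => j _; rewrite mulr_ge0 ?negbin_pmf_ge0 // exprn_ge0 // ltW.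
by apply: negbin_psum_pgf_le => //; exact: ltW.
Qed.

Lemma negbin_chernoff :
  (P [set t | cond (X^~ t)] <= (K * (p `^ r * (1 - (1 - p) * u) `^ (- r)) ^+ n)%:E)%E.
Proof.
have box_cup : \bigcup_M cond_box M = [set t | cond (X^~ t)].
  apply/seteqP; split => t; first by move=> [M _ []].
  move=> /= ct; exists (\max_(i < n) X i t).+1 => //; split => // i.
  by rewrite ltnS; exact: leq_bigmax.
have box_nd : nondecreasing_seq cond_box.
  apply/nondecreasing_seqP => M; apply/subsetPset => t [ct X_lt].
  by split => // i; rewrite ltnS ltnW.
have box_cvg := @nondecreasing_cvg_mu _ _ R P _ measurable_cond_box
  (bigcupT_measurable _ measurable_cond_box) box_nd.
rewrite -box_cup -(cvg_lim _ box_cvg) //.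
apply: lime_le; first by apply/cvg_ex; eexists; exact: box_cvg.
by near=> M; exact: P_cond_box_le.
Unshelve. all: end_near.
Qed.

End Truncation.

Lemma negbin_tilted_chernoff (cond : pred ('I_n -> nat)) (z : R) :
  0 < p -> p < 1 -> 1 < z ->
  (forall w, cond w -> 1 <= nb_tilt p z `^ ((\sum_i w i)%:R - n%:R * r * (z - 1))) ->
  (P [set t | cond (X^~ t)] <= (nb_bound r p n z)%:E)%E.
Proof.
move=> p_gt0 p_lt1 z_gt1 cond_tilt.
rewrite -nb_bound_tiltE //; apply: (@negbin_chernoff cond).
- exact: powR_ge0.
- exact: nb_tilt_gt0.
- by rewrite nb_tiltE // gtrBl invr_gt0; lra.
- by move=> w /cond_tilt; rewrite powR_sum_natr ?nb_tilt_gt0.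
Qed.

End NegbinChernoff.

Lemma sum_Tstat (R : realType) (r : R) (n : nat) (w : 'I_n -> nat) : 0 < r ->
  \sum_(i < n) Tstat r (w i) = n%:R + (\sum_(i < n) w i)%:R / r.
Proof.
move=> r_gt0; rewrite /Tstat -mulr_suml big_split /= sumr_const card_ord natr_sum.
by rewrite -mulr_natl; field; rewrite gt_eqF.
Qed.

Theorem corollary3 (R : realType) (d : measure_display) (T : measurableType d)
  (P : probability T R) (r p : R) (n : nat) (X : 'I_n -> T -> nat)
  (hr : 0 < r) (hp0 : 0 < p) (hp1 : p < 1)
  (hXmeas : forall i, measurable_fun setT (X i))
  (hXlaw : forall i (x : nat), P (X i @^-1` [set x]) = (negbin_pmf r p x)%:E)
  (hXind : mutually_independent_nat P X) :
  (forall z : R, p^-1 <= z ->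
     (P [set t | (n%:R * z <= \sum_(i < n) Tstat r (X i t))%R] <= (nb_bound r p n z)%:E)%E) /\
  (forall z : R, 1 < z -> z <= p^-1 ->
     (P [set t | (\sum_(i < n) Tstat r (X i t) <= n%:R * z)%R] <= (nb_bound r p n z)%:E)%E).
Proof.
have chernoff := negbin_tilted_chernoff hr (ltW hp1) hXmeas hXlaw hXind.
have p_inv_gt1 : 1 < p^-1 by rewrite invf_gt1.
split => z.
- move=> z_ge; have z_gt1 : 1 < z by lra.
  apply: (chernoff (fun w => n%:R * z <= \sum_i Tstat r (w i))) => // w.
  rewrite sum_Tstat // -lerBlDl ler_pdivlMr // => w_ge.
  rewrite -[X in X <= _](powRr0 (nb_tilt p z)) ler_powR ?nb_tilt_ge1 //; lra.
- move=> z_gt1 z_le.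
  apply: (chernoff (fun w => \sum_i Tstat r (w i) <= n%:R * z)) => // w.
  rewrite sum_Tstat // -lerBrDl ler_pdivrMr // => w_le.
  rewrite -[X in X <= _](powRr0 (nb_tilt p z)) ger_powR ?nb_tilt_le1 ?nb_tilt_gt0 //; lra.
Qed.
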